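(* Let $I = \{i_1 < \cdots < i_k\} \subset [n-1]$, $0 \leq m \leq n$ and $r \geq 0$. Then $\partial_{e_r(x_1, \ldots, x_{n-m})}\, \mathrm{d}_{i_1} \cdots \mathrm{d}_{i_k} \Delta_n$ equals the sum of the weights of all marked $n$-staircases with exactly $m$ grey columns, exactly $r$ marks $\circ$, and exactly $k$ columns containing $\times$'s, the numbers of $\times$'s in these columns being $i_1, \ldots, i_k$ in some order.
   Context: Work in $\mathbb{Q}[x_1, \ldots, x_n, \theta_1, \ldots, \theta_n]$ ($x$'s commute, $\theta$'s anticommute, $x_i\theta_j = \theta_j x_i$). $\Delta_n = \prod_{i<j}(x_j - x_i)$; $\partial_g$ substitutes $\partial_{x_i}$ for $x_i$ in $g$; $\mathrm{d}_i \omega = \sum_{j=1}^n \theta_j \partial_{x_j}^i \omega$; $e_r(x_1,\ldots,x_p)$ is the elementary symmetric polynomial ($e_0 = 1$, $e_r = 0$ for $r > p$). An $n$-staircase is a sequence $(h_1, \ldots, h_n)$ that is a permutation of $\{0, 1, \ldots, n-1\}$, pictured as $n$ bottom-justified columns where column $\ell$ has cells at heights $1, \ldots, h_\ell$. A marked $n$-staircase with $m$ grey columns consists of an $n$-staircase together with integers $a_\ell \geq 0$ and $b_\ell \in \{0,1\}$ for each column $\ell$, with $a_\ell + b_\ell \leq h_\ell$ and $b_\ell = 0$ for the last $m$ columns $\ell > n-m$ (the grey columns); column $\ell$ has $\times$'s in its top $a_\ell$ cells (heights $h_\ell - a_\ell + 1, \ldots, h_\ell$) and, if $b_\ell = 1$,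 an $\circ$ in the cell at height $h_\ell - a_\ell$. Let $c_1 < \cdots < c_p$ be the columns with $a_{c} > 0$. The weight of the marked staircase is the product of: the monomial $x_1^{h_1 - a_1 - b_1} \cdots x_n^{h_n - a_n - b_n} \theta_{c_1} \cdots \theta_{c_p}$; the sign $(-1)^{\#\{i<j : h_i > h_j\}} \operatorname{sgn} \prod_{1 \leq v < w \leq p}(a_{c_w} - a_{c_v})$ (where $\operatorname{sgn}$ is the signum function, so this is $0$ if two $a_{c_v}$ coincide); and the order, which is the product of the heights of all cells containing a $\times$ or an $\circ$. *)

From HB Require Import structures.
From mathcomp Require Import all_boot all_order all_fingroup all_algebra.
From mathcomp Require Export mpoly.
Set Implicit Arguments.
Unset Strict Implicit.
Unset Printing Implicit Defensive.
Import Order.TTheory GRing.Theory Num.Theory.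
Local Open Scope ring_scope.

(* Indices: variable/column i in {1..n} of the paper is (i-1 : 'I_n) here. *)

Notation qpoly n := {mpoly rat[n]}.

(* The superspace ring Q[x_1..x_n, theta_1..theta_n]: an element is written
   uniquely as  sum_S  w(S) theta_S  with w(S) in Q[x], where for
   S = {s_1 < ... < s_p}, theta_S := theta_{s_1} ... theta_{s_p}. *)
Definition superpoly (n : nat) := {ffun {set 'I_n} -> qpoly n}.

(* sign of moving theta_j to its place in theta_T (j \notin T):
   theta_j theta_T = (-1)^{#{t in T | t < j}} theta_{T u {j}} *)
Definition theta_sign n (j : 'I_n) (T : {set 'I_n}) : rat :=
  (-1) ^+ #|[set t in T | (val t < val j)%N]|.

Definition thetaL n (j : 'I_n) (w : superpoly n) : superpoly n :=
  [ffun S : {set 'I_n} => if j \in S then theta_sign j (S :\ j) *: w (S :\ j) else 0].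

(* coefficientwise action of an operator on Q[x] (commutes with thetas) *)
Definition coefwise n (f : qpoly n -> qpoly n) (w : superpoly n) : superpoly n :=
  [ffun S : {set 'I_n} => f (w S)].

Definition superC n (p : qpoly n) : superpoly n :=
  [ffun S : {set 'I_n} => if S == set0 then p else 0].

Definition pdiff n (g : qpoly n) (p : qpoly n) : qpoly n :=
  \sum_(m <- msupp g) g@_m *: p^`M[m].

Definition spdiff n (g : qpoly n) (w : superpoly n) : superpoly n :=
  coefwise (pdiff g) w.

Definition dop n (i : nat) (w : superpoly n) : superpoly n :=
  \sum_(j < n) thetaL j (coefwise (fun p => p^`M(j, i)) w).

Definition vandermonde n : qpoly n :=
  \prod_(i < n) \prod_(j < n | (val i < val j)%N) ('X_j - 'X_i).

Definition elemsym n (p r : nat) : qpoly n :=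
  \sum_(A : {set 'I_n} | [forall i in A, (val i < p)%N] && (#|A| == r)) \prod_(i in A) 'X_i.

(* A marked n-staircase is given by h : {perm 'I_n} (h_l = val (h l), a
   permutation of {0..n-1}), a : 'I_n -> 'I_n (numbers of x's; a_l <= h_l < n)
   and b : 'I_n -> bool (presence of a circle). *)

Definition is_marked_staircase n (m : nat) (h : {perm 'I_n})
    (a : {ffun 'I_n -> 'I_n}) (b : {ffun 'I_n -> bool}) : bool :=
  [forall l, (val (a l) + b l <= val (h l))%N] &&
  [forall l : 'I_n, (n - m <= l)%N ==> ~~ b l].

Definition xcols n (a : {ffun 'I_n -> 'I_n}) : {set 'I_n} :=
  [set c | (0 < val (a c))%N].

Definition inversions n (h : {perm 'I_n}) : nat :=
  #|[set p : 'I_n * 'I_n | (val p.1 < val p.2)%N && (val (h p.2) < val (h p.1))%N]|.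

Definition staircase_sign n (h : {perm 'I_n}) (a : {ffun 'I_n -> 'I_n}) : rat :=
  (-1) ^+ inversions h *
  \prod_(v in xcols a) \prod_(w in xcols a | (val v < val w)%N)
     Num.sg ((val (a w))%:R - (val (a v))%:R : rat).

(* product of heights of the cells with a x or a circle: in column l these are
   heights h_l - a_l - b_l + 1, ..., h_l *)
Definition staircase_order n (h : {perm 'I_n}) (a : {ffun 'I_n -> 'I_n})
    (b : {ffun 'I_n -> bool}) : nat :=
  \prod_(l < n) \prod_((val (h l) - val (a l) - b l).+1 <= t < (val (h l)).+1) t.

Definition staircase_monomial n (h : {perm 'I_n}) (a : {ffun 'I_n -> 'I_n})
    (b : {ffun 'I_n -> bool}) : 'X_{1..n} :=
  [multinom (val (h i) - val (a i) - b i)%N | i < n].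

Definition staircase_weight n (h : {perm 'I_n}) (a : {ffun 'I_n -> 'I_n})
    (b : {ffun 'I_n -> bool}) : superpoly n :=
  [ffun S : {set 'I_n} => if S == xcols a then
     (staircase_sign h a * (staircase_order h a b)%:R) *: 'X_[staircase_monomial h a b]
   else 0].

From HB Require Import structures.
From mathcomp Require Import all_boot all_order all_fingroup all_algebra.
From mathcomp Require Import mpoly.
Import GRing.Theory Num.Theory.
Local Open Scope ring_scope.
Set Implicit Arguments.
Unset Strict Implicit.
Unset Printing Implicit Defensive.

(* Expanding the Vandermonde determinant gives Delta_n = sum_h sgn(h) x^h, a sum over
   the bare staircases.  Apply d_{i_k}, ..., d_{i_1} in turn: d_i stacks i crosses on a
   column j that has none, contributing theta_j and the falling factorial h_j^(i) (the
   product of the heights of the new crosses).  Since i is smaller than every count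
   already present, reordering theta_j into theta_T costs exactly the signs that the new
   column adds to sgn prod (a_w - a_v).  Finally each monomial of e_r(x_1..x_{n-m}) strips
   one more cell, a circle, from r distinct white columns.  Marks overflowing a column
   only occur with a vanishing falling factorial, so they drop out. *)

Lemma prod_diff_perm (R : comNzRingType) n (x : 'I_n -> R) (s : 'S_n) :
  \prod_(i < n) \prod_(j < n | (val i < val j)%N) (x (s j) - x (s i)) =
  (-1) ^+ s * \prod_(i < n) \prod_(j < n | (val i < val j)%N) (x j - x i).
Proof.
have detV (y : 'I_n -> R) : \det (Vandermonde n (\row_j y j)) =
    \prod_(i < n) \prod_(j < n | (val i < val j)%N) (y j - y i).
  by rewrite det_Vandermonde; apply: eq_bigr => i _; apply: eq_big => // j _; rewrite !mxE.
rewrite -(detV (x \o s)) -detV.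
have -> : Vandermonde n (\row_j (x \o s) j) = col_perm s (Vandermonde n (\row_j x j)).
  by apply/matrixP => i j; rewrite !mxE.
by rewrite col_permE det_mulmx det_perm odd_permV mulrC.
Qed.

Lemma prod_sgr_diff_perm (R : numDomainType) n (s : 'S_n) :
  \prod_(i < n) \prod_(j < n | (val i < val j)%N) Num.sg ((s j)%:R - (s i)%:R : R) =
  (-1) ^+ inversions s.
Proof.
rewrite pair_big_dep /= (bigID (fun p : 'I_n * 'I_n => (val (s p.2) < val (s p.1))%N)) /=.
rewrite [X in _ * X]big1 ?mulr1 => [|p /andP [lt12 not_inv]]; last first.
  apply: gtr0_sg; rewrite subr_gt0 ltr_nat ltn_neqAle leqNgt not_inv andbT.
  by rewrite val_eqE (inj_eq perm_inj) -val_eqE neq_ltn lt12.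
rewrite (eq_bigr (fun _ => -1)) => [|p /andP [_ inv]]; last first.
  by apply: ltr0_sg; rewrite subr_lt0 ltr_nat.
by rewrite prodr_const /inversions cardsE.
Qed.

Lemma odd_inversions n (s : 'S_n) : odd (inversions s) = s.
Proof.
(* Compare signs in [prod_diff_perm] at the points x_i = i. *)
apply: (@signr_inj rat); rewrite signr_odd -(prod_sgr_diff_perm rat).
have sgr_prod (I : Type) (r : seq I) (P : pred I) (F : I -> rat) :
    Num.sg (\prod_(i <- r | P i) F i) = \prod_(i <- r | P i) Num.sg (F i).
  exact: (big_morph Num.sg (@sgrM rat) (sgr1 rat)).
under eq_bigr do rewrite -sgr_prod.
have diff_gt0 : 0 < \prod_(i < n) \prod_(j < n | (val i < val j)%N) (j%:R - i%:R : rat).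
  by apply: prodr_gt0 => i _; apply: prodr_gt0 => j ij; rewrite subr_gt0 ltr_nat.
rewrite -sgr_prod (prod_diff_perm (fun i : 'I_n => i%:R : rat)) sgrM (gtr0_sg diff_gt0) mulr1.
by case: (odd_perm s); rewrite ?sgrN1 ?sgr1.
Qed.

Definition perm_mnm n (s : 'S_n) : 'X_{1..n} := [multinom (val (s i)) | i < n].

Lemma vandermondeE n :
  @vandermonde n = \sum_(s : 'S_n) (-1) ^+ inversions s *: 'X_[perm_mnm s].
Proof.
have -> : @vandermonde n = \det (Vandermonde n (\row_j 'X_j))^T.
  rewrite det_tr det_Vandermonde; apply: eq_bigr => i _.
  by apply: eq_big => // j _; rewrite !mxE.
apply: eq_bigr => s _.
rewrite -[(-1) ^+ inversions s]signr_odd odd_inversions mulr_sign scaler_sign.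
by congr (if _ then - _ else _); rewrite mpolyXE_id; apply: eq_bigr => i _; rewrite !mxE mnmE.
Qed.

Section Superspace.
Variable n : nat.
Implicit Types (S : {set 'I_n}) (g p : {mpoly rat[n]}) (w : superpoly n).

Definition supermon S p : superpoly n := [ffun T => if T == S then p else 0].

Lemma supermon_is_zmod_morphism S : zmod_morphism (supermon S).
Proof. by move=> p q; apply/ffunP => T; rewrite !ffunE; case: ifP; rewrite ?subr0. Qed.

HB.instance Definition _ S :=
  GRing.isZmodMorphism.Build _ _ (supermon S) (supermon_is_zmod_morphism S).

Lemma thetaL_is_zmod_morphism (j : 'I_n) : zmod_morphism (thetaL j).
Proof.
by move=> w w'; apply/ffunP => T; rewrite !ffunE; case: ifP; rewrite ?subr0 // scalerBr.
Qed.

HB.instance Definition _ j :=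
  GRing.isZmodMorphism.Build _ _ (thetaL j) (thetaL_is_zmod_morphism j).

Lemma coefwise_is_zmod_morphism (f : {additive {mpoly rat[n]} -> {mpoly rat[n]}}) :
  zmod_morphism (coefwise f).
Proof. by move=> w w'; apply/ffunP => T; rewrite !ffunE raddfB. Qed.

HB.instance Definition _ (f : {additive {mpoly rat[n]} -> {mpoly rat[n]}}) :=
  GRing.isZmodMorphism.Build _ _ (coefwise f) (coefwise_is_zmod_morphism f).

Lemma dop_is_zmod_morphism i : zmod_morphism (@dop n i).
Proof. by move=> w w'; rewrite /dop -sumrB; apply: eq_bigr => j _; rewrite !raddfB. Qed.

HB.instance Definition _ i :=
  GRing.isZmodMorphism.Build _ _ (@dop n i) (dop_is_zmod_morphism i).

Lemma pdiff_is_linear g : linear (pdiff g).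
Proof.
move=> c p q; rewrite /pdiff scaler_sumr -big_split; apply: eq_bigr => m _.
by rewrite mderivmD mderivmZ scalerDr !scalerA mulrC.
Qed.

HB.instance Definition _ g :=
  GRing.isLinear.Build rat {mpoly rat[n]} {mpoly rat[n]} _ (pdiff g) (pdiff_is_linear g).

HB.instance Definition _ g := GRing.Additive.copy (spdiff g) (coefwise (pdiff g)).

Lemma spdiff_supermon g S p : spdiff g (supermon S p) = supermon S (pdiff g p).
Proof. by apply/ffunP => T; rewrite !ffunE; case: ifP; rewrite ?raddf0. Qed.

Lemma dop_supermon i S p :
  dop i (supermon S p) =
  \sum_(j | j \notin S) supermon (j |: S) (theta_sign j S *: p^`M(j, i)).
Proof.
rewrite /dop [RHS]big_mkcond; apply: eq_bigr => j _; apply/ffunP => T.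
case: ifPn => jS; rewrite !ffunE; last first.
  case: ifP => // jT; case: eqP => [TjS|_]; last by rewrite raddf0 scaler0.
  by move: jS; rewrite -TjS setD11.
case: ifPn => jT; last by case: eqP => // TE; move: jT; rewrite TE setU11.
have -> : (T :\ j == S) = (T == j |: S).
  by apply/eqP/eqP => [<-|->]; rewrite ?setD1K ?setU1K.
by case: eqP => [->|_]; rewrite ?setU1K ?raddf0 ?scaler0.
Qed.

Lemma pdiff_subset g p (s : seq 'X_{1..n}) : uniq s -> {subset msupp g <= s} ->
  pdiff g p = \sum_(m <- s) g@_m *: p^`M[m].
Proof.
move=> s_uniq gs; rewrite /pdiff [RHS](bigID (mem (msupp g))) /=.
rewrite [X in _ + X]big1 ?addr0 => [|m /memN_msupp_eq0 ->]; last by rewrite scale0r.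
rewrite -[RHS]big_filter; apply/perm_big/uniq_perm; rewrite ?msupp_uniq ?filter_uniq //.
by move=> m; rewrite mem_filter; case: (boolP (m \in msupp g)) => // /gs ->.
Qed.

Lemma pdiffDl g1 g2 p : pdiff (g1 + g2) p = pdiff g1 p + pdiff g2 p.
Proof.
pose s := undup (msupp g1 ++ msupp g2).
have g1s : {subset msupp g1 <= s} by move=> m m1; rewrite mem_undup mem_cat m1.
have g2s : {subset msupp g2 <= s} by move=> m m2; rewrite mem_undup mem_cat m2 orbT.
have g12s : {subset msupp (g1 + g2) <= s} by move=> m /msuppD_le; rewrite mem_undup.
rewrite !(@pdiff_subset _ _ s) ?undup_uniq // -big_split.
by apply: eq_bigr => m _; rewrite mcoeffD scalerDl.
Qed.

Lemma pdiff0l p : pdiff 0 p = 0.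
Proof. by rewrite /pdiff msupp0 big_nil. Qed.

Lemma pdiff_suml (I : Type) (r : seq I) (P : pred I) (F : I -> {mpoly rat[n]}) p :
  pdiff (\sum_(i <- r | P i) F i) p = \sum_(i <- r | P i) pdiff (F i) p.
Proof.
exact: (big_morph (fun g => pdiff g p) (fun g1 g2 => pdiffDl g1 g2 p) (pdiff0l p)).
Qed.

Lemma pdiffX m p : pdiff 'X_[m] p = p^`M[m].
Proof. by rewrite /pdiff msuppX big_seq1 mcoeffX eqxx scale1r. Qed.

Definition bool_mnm (b : {ffun 'I_n -> bool}) : 'X_{1..n} := [multinom (b i : nat) | i < n].

Lemma elemsymE k r :
  @elemsym n k r =
  \sum_(b : {ffun 'I_n -> bool} | [forall l : 'I_n, (k <= l)%N ==> ~~ b l]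
                                 && ((\sum_(l < n) b l)%N == r)) 'X_[bool_mnm b].
Proof.
pose set_of (b : {ffun 'I_n -> bool}) := [set l | b l].
pose ffun_of (A : {set 'I_n}) := [ffun l => l \in A].
have set_ofK : cancel set_of ffun_of by move=> b; apply/ffunP => l; rewrite ffunE inE.
have ffun_ofK : cancel ffun_of set_of by move=> A; apply/setP => l; rewrite inE ffunE.
rewrite /elemsym (reindex set_of (onW_bij _ (Bijective set_ofK ffun_ofK))) /=.
apply: eq_big => [b|b _].
  congr andb.
    apply/forallP/forallP => b_lt l; apply/implyP; rewrite ?inE.
      by move=> kl; apply/negP => bl; move: (b_lt l); rewrite inE bl /= ltnNge kl.
    by move=> bl; move: (b_lt l); rewrite bl implybF -ltnNge.
  rewrite -sum1_card big_mkcond; congr (_ == r); apply: eq_bigr => l _.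
  by rewrite inE; case: (b l).
rewrite mprodXE; congr 'X_[_]; apply/mnmP => l.
rewrite mnm_sumE mnmE big_mkcond (bigD1 l) //= big1 ?addn0 => [|c cl].
  by rewrite inE mnm1E eqxx; case: (b l).
by rewrite mnm1E (negbTE cl); case: ifP.
Qed.

Lemma pdiff_elemsym k r (mu : 'X_{1..n}) :
  pdiff (@elemsym n k r) 'X_[mu] =
  \sum_(b : {ffun 'I_n -> bool} | [forall l : 'I_n, (k <= l)%N ==> ~~ b l]
                                 && ((\sum_(l < n) b l)%N == r))
     ((\prod_(i < n) (mu i) ^_ (b i))%:R *: 'X_[mu - bool_mnm b]).
Proof.
rewrite elemsymE pdiff_suml; apply: eq_bigr => b _.
by rewrite pdiffX mderivmX; congr (_%:R *: _); apply: eq_bigr => i _; rewrite mnmE.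
Qed.

End Superspace.

Section Staircases.
Variable n : nat.
Implicit Types (h : {perm 'I_n}) (a : {ffun 'I_n -> 'I_n}) (b : {ffun 'I_n -> bool}).

Definition xcounts a : seq nat := [seq val (a c) | c <- enum 'I_n & (0 < val (a c))%N].

Definition set_col a (j v : 'I_n) : {ffun 'I_n -> 'I_n} :=
  [ffun c => if c == j then v else a c].

Definition ord0_of (j : 'I_n) : 'I_n := Ordinal (leq_ltn_trans (leq0n j) (ltn_ord j)).

Definition no_crosses : {ffun 'I_n -> 'I_n} := [ffun c => ord0_of c].

Definition no_circles : {ffun 'I_n -> bool} := [ffun=> false].

(* Equals [staircase_order h a b] when the marks fit in their columns (see
   [marked_weight_fit]) and vanishes otherwise; it is what differentiation produces. *)
Definition falling_order h a b : nat := \prod_(l < n) (val (h l)) ^_ (val (a l) + b l).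

Definition marked_weight h a b : superpoly n :=
  supermon (xcols a)
    ((staircase_sign h a * (falling_order h a b)%:R) *: 'X_[staircase_monomial h a b]).

Definition crossed_sum (J : seq nat) : superpoly n :=
  \sum_h \sum_(a | perm_eq (xcounts a) J) marked_weight h a no_circles.

Lemma notin_xcols a j : (j \notin xcols a) = (a j == ord0_of j).
Proof. by rewrite inE -leqNgt leqn0 -val_eqE. Qed.

Lemma count_xcounts (q : pred nat) a :
  count q (xcounts a) = #|[pred c | q (val (a c)) && (0 < val (a c))%N]|.
Proof.
rewrite /xcounts count_map count_filter -sum1_count big_enum_cond /= sum1_card.
by apply: eq_card => c; rewrite !inE.
Qed.

Lemma mem_xcounts a c : (0 < val (a c))%N -> val (a c) \in xcounts a.
Proof. by move=> ac_gt0; apply/mapP; exists c; rewrite // mem_filter ac_gt0 mem_enum. Qed.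

Lemma xcounts_nil a : perm_eq (xcounts a) [::] = (a == no_crosses).
Proof.
apply/perm_nilP/eqP => [a_nil|->].
  apply/ffunP => c; rewrite ffunE; apply/val_inj => /=.
  by case: (posnP (val (a c))) => // /mem_xcounts; rewrite a_nil.
apply/nilP; rewrite /nilp -count_predT count_xcounts; apply/eqP/eq_card0 => c.
by rewrite !inE ffunE.
Qed.

Lemma set_col_eq a j v : set_col a j v j = v.
Proof. by rewrite ffunE eqxx. Qed.

Lemma set_col_set_col a j v w : set_col (set_col a j v) j w = set_col a j w.
Proof. by apply/ffunP => c; rewrite !ffunE; case: eqP. Qed.

Lemma set_col_id a j v : (set_col a j v == a) = (a j == v).
Proof.
apply/eqP/eqP => [<-|aj]; first exact: set_col_eq.
by apply/ffunP => c; rewrite ffunE; case: eqP => [->|].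
Qed.

Section AddColumn.
Variables (h : {perm 'I_n}) (a : {ffun 'I_n -> 'I_n}) (j v : 'I_n).
Hypothesis (aj0 : j \notin xcols a) (v_gt0 : (0 < val v)%N).

Let aj0_val : val (a j) = 0%N.
Proof. by move: aj0; rewrite notin_xcols => /eqP ->. Qed.

Lemma xcounts_set_col : perm_eq (xcounts (set_col a j v)) (val v :: xcounts a).
Proof.
apply/seq.permP => q /=; rewrite !count_xcounts.
rewrite (cardD1 j) [in RHS](cardD1 j) !inE /= set_col_eq aj0_val andbF v_gt0 andbT add0n.
by congr (_ + _)%N; apply: eq_card => c; rewrite !inE ffunE; case: (c == j).
Qed.

Lemma xcols_set_col : xcols (set_col a j v) = j |: xcols a.
Proof.
by apply/setP => c; rewrite !inE ffunE; case: (c =P j) => [->|]; rewrite ?v_gt0 ?eqxx.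
Qed.

Lemma falling_order_set_col :
  falling_order h (set_col a j v) no_circles =
  (falling_order h a no_circles * (val (h j)) ^_ (val v))%N.
Proof.
rewrite /falling_order (bigD1 j) // [in RHS](bigD1 j) //= !ffunE eqxx aj0_val.
rewrite addn0 ffactn0 mul1n mulnC; congr (_ * _)%N; apply: eq_bigr => c cj.
by rewrite ffunE (negbTE cj).
Qed.

Lemma staircase_monomial_set_col :
  staircase_monomial h (set_col a j v) no_circles =
  (staircase_monomial h a no_circles - U_(j) *+ val v)%MM.
Proof.
apply/mnmP => c; rewrite mnmBE !mnmE mulmnE mnm1E !ffunE.
case: (c =P j) => [->|/eqP cj]; first by rewrite eqxx aj0_val !subn0 mul1n.
by rewrite eq_sym (negbTE cj) mul0n subn0.
Qed.

Lemma staircase_sign_set_col :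
  (forall c, (0 < val (a c))%N -> (val v < val (a c))%N) ->
  staircase_sign h (set_col a j v) = theta_sign j (xcols a) * staircase_sign h a.
Proof.
(* Pairs (u, j) with u < j contribute -1, the others +1, since v is the least count. *)
move=> v_min; rewrite /staircase_sign mulrCA; congr (_ * _).
have a_set_col c : c \in xcols a -> set_col a j v c = a c.
  by move=> cX; rewrite ffunE; case: (c =P j) => // cj; move: aj0; rewrite -cj cX.
rewrite xcols_set_col big_setU1 //= big_mkcondr big_setU1 //= ltnn mul1r.
rewrite [X in X * _]big1 ?mul1r => [|w wX]; last first.
  case: ifP => // _; rewrite a_set_col // set_col_eq.
  by apply: gtr0_sg; rewrite subr_gt0 ltr_nat v_min //; move: wX; rewrite inE.
rewrite (eq_bigr (fun u => (if (val u < val j)%N then -1 else 1) *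
   \prod_(w in xcols a | (val u < val w)%N)
     Num.sg ((val (a w))%:R - (val (a u))%:R : rat))) => [|u uX]; last first.
  rewrite big_mkcondr big_setU1 //= (a_set_col u uX) set_col_eq; congr (_ * _).
    case: ifP => // _; apply: ltr0_sg; rewrite subr_lt0 ltr_nat v_min //.
    by move: uX; rewrite inE.
  by rewrite [RHS]big_mkcondr; apply: eq_bigr => w wX; rewrite a_set_col.
rewrite big_split /= -big_mkcondr /theta_sign -prodr_const; congr (_ * _).
by apply: eq_bigl => u; rewrite !inE.
Qed.

End AddColumn.

Lemma dop_marked_weight h a (i : 'I_n) : (0 < val i)%N ->
  (forall c, (0 < val (a c))%N -> (val i < val (a c))%N) ->
  dop i (marked_weight h a no_circles) =
  \sum_(j | j \notin xcols a) marked_weight h (set_col a j i) no_circles.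
Proof.
move=> i_gt0 i_min; rewrite dop_supermon; apply: eq_bigr => j aj0.
rewrite /marked_weight xcols_set_col // staircase_sign_set_col //.
rewrite falling_order_set_col // staircase_monomial_set_col //.
rewrite mderivmZ mderivnX !scalerA mnmE ffunE.
by move: aj0; rewrite notin_xcols => /eqP ->; rewrite !subn0 natrM !mulrA.
Qed.

Lemma card_col_of_count a (i : 'I_n) J :
  (0 < val i)%N -> val i \notin J -> perm_eq (xcounts a) (val i :: J) ->
  #|[pred c | a c == i]| = 1%N.
Proof.
move=> i_gt0 iJ aJ.
suff -> : #|[pred c | a c == i]| = count (pred1 (val i)) (xcounts a).
  by rewrite (seq.permP aJ) /= eqxx (count_memPn iJ).
rewrite count_xcounts; apply: eq_card => c; rewrite !inE -val_eqE.
by case: eqP => // ->; rewrite i_gt0.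
Qed.

Lemma crossed_sum_cons (i : 'I_n) J :
  (0 < val i)%N -> all (fun x => val i < x)%N J ->
  dop i (crossed_sum J) = crossed_sum (val i :: J).
Proof.
move=> i_gt0 J_gt_i; rewrite raddf_sum; apply: eq_bigr => h _; rewrite raddf_sum.
have i_min a : perm_eq (xcounts a) J -> forall c, (0 < val (a c))%N -> (val i < val (a c))%N.
  by move=> aJ c /mem_xcounts; rewrite (perm_mem aJ); apply: (allP J_gt_i).
rewrite (eq_bigr _ (fun a aJ => dop_marked_weight h i_gt0 (i_min a aJ))).
rewrite (exchange_big_dep predT) //=.
have iJ : val i \notin J by apply/negP => /(allP J_gt_i); rewrite ltnn.
rewrite (eq_bigr (fun a => \sum_(j | a j == i) marked_weight h a no_circles)) => [|a aJ];
  last by rewrite sumr_const (card_col_of_count i_gt0 iJ aJ).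
rewrite [RHS](exchange_big_dep predT) //=; apply: eq_bigr => j _.
rewrite [RHS](reindex_onto (fun a => set_col a j i) (fun a => set_col a j (ord0_of j))) /=;
  last by move=> a /andP [_ /eqP aj]; apply/eqP; rewrite set_col_set_col set_col_id aj.
apply: eq_bigl => a; rewrite set_col_eq eqxx andbT set_col_set_col set_col_id.
rewrite -notin_xcols; case: (boolP (j \notin xcols a)) => [aj0|]; rewrite ?andbF //.
by rewrite (permPl (xcounts_set_col aj0 i_gt0)) perm_cons.
Qed.

Lemma crossed_sum_nil : superC (@vandermonde n) = crossed_sum [::].
Proof.
rewrite /crossed_sum vandermondeE (_ : forall p, superC p = supermon set0 p) // raddf_sum.
apply: eq_bigr => h _.
rewrite (eq_bigl _ _ xcounts_nil) big_pred1_eq /marked_weight /staircase_sign.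
have -> : xcols no_crosses = set0 by apply/setP => c; rewrite !inE ffunE /= ltnn.
rewrite big_set0 mulr1 /falling_order big1 ?mulr1 => [|l _]; last first.
  by rewrite !ffunE addn0 ffactn0.
by congr (supermon _ (_ *: 'X_[_])); apply/mnmP => c; rewrite !mnmE !ffunE /= !subn0.
Qed.

Lemma foldr_dop_vandermonde J : sorted ltn J -> all (fun i => (0 < i < n)%N) J ->
  foldr (@dop n) (superC (@vandermonde n)) J = crossed_sum J.
Proof.
elim: J => [|i J IH] /= J_sorted; first by rewrite crossed_sum_nil.
case/andP => /andP [i_gt0 i_lt_n] J_range.
rewrite IH ?(path_sorted J_sorted) // (@crossed_sum_cons (Ordinal i_lt_n)) //.
exact: order_path_min ltn_trans J_sorted.
Qed.

Lemma falling_order_circles h a b :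
  (falling_order h a no_circles *
   \prod_(l < n) (staircase_monomial h a no_circles l) ^_ (b l))%N =
  falling_order h a b.
Proof.
rewrite /falling_order -big_split; apply: eq_bigr => l _ /=.
rewrite mnmE !ffunE /= !addn0 subn0.
by case: (b l); rewrite ?addn1 ?ffactn1 ?ffactnSr // addn0 ffactn0 muln1.
Qed.

Lemma staircase_monomial_circles h a b :
  staircase_monomial h a b = (staircase_monomial h a no_circles - bool_mnm b)%MM.
Proof. by apply/mnmP => c; rewrite mnmBE !mnmE ffunE subn0. Qed.

Lemma spdiff_elemsym_marked_weight k r h a :
  spdiff (@elemsym n k r) (marked_weight h a no_circles) =
  \sum_(b : {ffun 'I_n -> bool} | [forall l : 'I_n, (k <= l)%N ==> ~~ b l]
                                 && ((\sum_(l < n) b l)%N == r))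
     marked_weight h a b.
Proof.
rewrite spdiff_supermon linearZ /= pdiff_elemsym scaler_sumr raddf_sum.
apply: eq_bigr => b _.
by rewrite scalerA -mulrA -natrM falling_order_circles -staircase_monomial_circles.
Qed.

Lemma prod_range_ffact (top x : nat) : (x <= top)%N ->
  (\prod_((top - x).+1 <= t < top.+1) t)%N = top ^_ x.
Proof.
elim: x => [|x IH] x_le; first by rewrite subn0 big_geq // ffactn0.
by rewrite subnSK // big_ltn ?ltnS ?leq_subr // IH ?(ltnW x_le) // ffactnSr mulnC.
Qed.

Section Fitting.
Variables (h : {perm 'I_n}) (a : {ffun 'I_n -> 'I_n}) (b : {ffun 'I_n -> bool}).

Lemma marked_weight_unfit :
  ~~ [forall l, (val (a l) + b l <= val (h l))%N] -> marked_weight h a b = 0.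
Proof.
rewrite negb_forall => /existsP [l unfit]; rewrite /marked_weight /falling_order.
by rewrite (bigD1 l) //= ffact_small ?mul0n ?mulr0 ?scale0r ?raddf0 // ltnNge.
Qed.

Lemma marked_weight_fit :
  [forall l, (val (a l) + b l <= val (h l))%N] ->
  marked_weight h a b = staircase_weight h a b.
Proof.
move/forallP => fit; rewrite /marked_weight /falling_order /staircase_order.
congr (supermon _ ((_ * _%:R) *: _)); apply: eq_bigr => l _.
by rewrite -subnDA prod_range_ffact.
Qed.

End Fitting.

End Staircases.

Theorem lemma4p5 (n : nat) (I : seq nat) (m r : nat) :
  sorted ltn I -> all (fun i => (0 < i < n)%N) I -> (m <= n)%N ->
  spdiff (@elemsym n (n - m) r) (foldr (@dop n) (superC (@vandermonde n)) I) =
  \sum_(h : {perm 'I_n}) \sum_(a : {ffun 'I_n -> 'I_n}) \sum_(b : {ffun 'I_n -> bool}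
        | [&& is_marked_staircase m h a b,
              (\sum_(l < n) b l)%N == r &
              perm_eq [seq val (a c) | c <- enum 'I_n & (0 < val (a c))%N] I])
     staircase_weight h a b.
Proof.
move=> I_sorted I_range _.
rewrite foldr_dop_vandermonde // raddf_sum; apply: eq_bigr => h _.
rewrite raddf_sum big_mkcond /=; apply: eq_bigr => a _.
case: ifPn => aI; last by rewrite big_pred0 // => b; apply/negbTE/and3P => -[_ _]; exact/negP.
pose fit (b : {ffun 'I_n -> bool}) := [forall l, (val (a l) + b l <= val (h l))%N].
rewrite spdiff_elemsym_marked_weight (bigID fit) /=.
rewrite [X in _ + X]big1 ?addr0 => [|b /andP [_ b_unfit]]; last exact: marked_weight_unfit.
apply: eq_big => [b|b /andP [_ b_fit]]; last exact: marked_weight_fit.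
by rewrite /is_marked_staircase andbT [LHS]andbC andbA.
Qed.
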